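(* Let $n\ge 2$, and let $S$ be a semitransitive subsemigroup of $\mathcal{I}_n\setminus\mathcal{S}_n$ with $|S|\le 2n$. Then $S$ contains exactly two non-zero idempotents. Their domains are disjoint, and the union of their domains is $X=\{1,\dots,n\}$.
   Context: $\mathcal{I}_n$ denotes the symmetric inverse semigroup of all partial injective maps of $X=\{1,\dots,n\}$ to itself (including the empty map, denoted $0$), with maps written on the right ($x\varphi$) and composed left to right ($x(\varphi\psi)=(x\varphi)\psi$). $\mathcal{S}_n$ is the symmetric group of all permutations of $X$, so $\mathcal{I}_n\setminus\mathcal{S}_n$ is the set of non-invertible partial injections. A semigroup $S$ of partial transformations of $X$ is semitransitive if for all $x,y\in X$ there is $\varphi\in S$ with $x\varphi=y$ or $y\varphi=x$. An idempotent is non-zero if it is not the empty map. *)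

(* X = {1..n} is modelled by 'I_n = {0..n-1}. *)
From mathcomp Require Import all_boot.
Set Implicit Arguments. Unset Strict Implicit. Unset Printing Implicit Defensive.

(* partial maps of 'I_n: x |-> None means x is outside the domain *)
Definition pfun (n : nat) := {ffun 'I_n -> option 'I_n}.

Definition pinj n (f : pfun n) : bool :=
  [forall x, forall y, ((f x != None) && (f x == f y)) ==> (x == y)].

Definition pdom n (f : pfun n) : {set 'I_n} := [set x | f x != None].

(* composition, maps written on the right: x (f ; g) = (x f) g *)
Definition pcomp n (f g : pfun n) : pfun n := [ffun x => obind g (f x)].

Definition pzero (n : nat) : pfun n := [ffun _ => None].

Definition is_perm n (f : pfun n) : bool := pinj f && (pdom f == setT).

Definition pidem n (e : pfun n) : bool := pcomp e e == e.

Definition subsemigroup_noninv n (S : {set pfun n}) : Prop :=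
  (forall f, f \in S -> pinj f && ~~ is_perm f) /\
  (forall f g, f \in S -> g \in S -> pcomp f g \in S).

Definition semitransitive n (S : {set pfun n}) : Prop :=
  forall x y : 'I_n, exists2 phi, phi \in S & (phi x = Some y \/ phi y = Some x).

(* For every point x we pick an idempotent of S fixing x whose domain is as
   small as possible, and call that domain the block of x.  Idempotents of a
   semigroup of partial injections are partial identities, which gives:
   every idempotent of S defined at x contains the block of x, blocks are
   monotone (a in block x implies block a in block x), and no block is all
   of X, since S contains no permutation.  Semitransitivity makes "some
   element of S maps x to y" a total preorder, and it forces the empty map
   into S.
   If three distinct blocks existed, linking points through minimal
   idempotents would produce 2n + 1 distinct elements of S: the empty map, for
   each y an element from the least point of its block to y, and for each y an
   element between y and a fixed point of the "next" block.  Hence there are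
   exactly two blocks; then every non-zero idempotent of S has a block as its
   domain, and the two minimal idempotents are the only ones. *)

From mathcomp Require Import all_boot.
Set Implicit Arguments. Unset Strict Implicit. Unset Printing Implicit Defensive.

Section PartialMaps.
Variable n : nat.
Implicit Types (f g h e : pfun n) (A : {set 'I_n}).

Lemma pcompE f g x : pcomp f g x = obind g (f x).
Proof. by rewrite ffunE. Qed.

Lemma pcompA : associative (@pcomp n).
Proof. by move=> f g h; apply/ffunP=> x; rewrite !pcompE; case: (f x) => //= y; rewrite pcompE. Qed.

Lemma in_pdom f x : (x \in pdom f) = (f x != None).
Proof. by rewrite inE. Qed.

Lemma pdom_pcomp f g : pdom (pcomp f g) \subset pdom f.
Proof. by apply/subsetP=> x; rewrite !in_pdom pcompE; case: (f x). Qed.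

Lemma pinjP f x y : pinj f -> f x = f y -> f x != None -> x = y.
Proof.
move=> /forallP /(_ x) /forallP /(_ y) f_inj fxy fx.
by apply/eqP; apply: (implyP f_inj); rewrite fx fxy eqxx.
Qed.

Lemma pdom_nonzero f : f != pzero n -> exists x, x \in pdom f.
Proof.
move=> nz; apply/set0Pn; apply: contra nz => /eqP dom0.
apply/eqP/ffunP=> x; rewrite ffunE; apply/eqP.
by have := in_pdom f x; rewrite dom0 inE => /esym/negbFE.
Qed.

Lemma total_is_perm f : pinj f -> pdom f = setT -> is_perm f.
Proof. by move=> f_inj f_tot; rewrite /is_perm f_inj f_tot eqxx. Qed.

Definition pid f := forall x y, f x = Some y -> y = x.

Lemma pidem_pid e : pinj e -> pidem e -> pid e.
Proof.
move=> e_inj /eqP ee x y exy.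
have : pcomp e e x = e x by rewrite ee.
rewrite pcompE exy /= => eyx.
by apply: (pinjP e_inj); rewrite ?eyx ?exy.
Qed.

Lemma pid_pidem e : pid e -> pidem e.
Proof.
move=> e_id; apply/eqP/ffunP=> x; rewrite pcompE.
by case e_x: (e x) => [y|] //=; move: (e_x); rewrite (e_id _ _ e_x).
Qed.

Lemma pid_pcomp e f : pid e -> pid f -> pid (pcomp e f).
Proof.
move=> e_id f_id x y; rewrite pcompE.
by case e_x: (e x) => [z|] //= /f_id ->; apply: e_id.
Qed.

Lemma pid_eq e f : pid e -> pid f -> pdom e = pdom f -> e = f.
Proof.
move=> e_id f_id /setP dom_ef; apply/ffunP=> x; move: (dom_ef x); rewrite !in_pdom.
case e_x: (e x) => [y|]; case fx: (f x) => [z|] //= _.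
by rewrite (e_id _ _ e_x) (f_id _ _ fx).
Qed.

Lemma pid_fix e x : pid e -> x \in pdom e -> e x = Some x.
Proof. by move=> e_id; rewrite in_pdom; case e_x: (e x) => [y|] //= _; rewrite (e_id _ _ e_x). Qed.

Lemma pinj_onto f A y : pinj f ->
  (forall t, t \in A -> exists2 t', f t = Some t' & t' \in A) ->
  y \in A -> exists2 t, t \in A & f t = Some y.
Proof.
move=> f_inj f_A yA; pose g t := odflt t (f t).
have g_f t : t \in A -> f t = Some (g t).
  by move=> /f_A [t' ft _]; rewrite /g ft.
have g_inj : {in A &, injective g}.
  by move=> t1 t2 t1A t2A g12; apply: (pinjP f_inj); rewrite !g_f ?g12.
have gA_sub : g @: A \subset A.
  by apply/subsetP=> _ /imsetP [t tA ->]; have [t' ft t'A] := f_A t tA; rewrite /g ft.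
have gA : g @: A = A by apply/eqP; rewrite eqEcard gA_sub (card_in_imset g_inj) leqnn.
have /imsetP [t tA ->] : y \in g @: A by rewrite gA.
by exists t; last exact: g_f.
Qed.

End PartialMaps.

Section IdempotentPower.
Variables (T : finType) (op : T -> T -> T).
Hypothesis opA : associative op.

(* pw a k is the (k+1)-th power of a. *)
Definition pw (a : T) (k : nat) : T := iter k (op a) a.

Lemma pw_add a i j : op (pw a i) (pw a j) = pw a (i + j).+1.
Proof. by elim: i => [|i IHi] //=; rewrite -opA IHi. Qed.

Lemma pw_periodic a i p : pw a i = pw a (i + p) ->
  forall m c, i <= m -> pw a (m + c * p) = pw a m.
Proof.
move=> per; have step m : i <= m -> pw a (m + p) = pw a m.
  move=> /subnK <-; rewrite -addnA.
  by rewrite [pw a (_ + (i + p))]iterD [pw a (_ + i)]iterD -/(pw a (i + p)) -per.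
move=> m c le_im; elim: c => [|c IHc]; first by rewrite addn0.
by rewrite mulSnr addnA step ?IHc // (leq_trans le_im) ?leq_addr.
Qed.

Lemma pw_idempotent a : exists k, op (pw a k) (pw a k) = pw a k.
Proof.
have : ~~ injectiveb (fun i : 'I_#|T|.+1 => pw a i).
  by apply/injectiveP=> /leq_card; rewrite card_ord ltnn.
case/injectivePn=> i [j neq_ij eq_ij].
have [i0 [p [p_gt0 per]]] : exists i0 p, 0 < p /\ pw a i0 = pw a (i0 + p).
  case: (ltngtP i j) => [lt_ij|lt_ji|/val_inj eq]; last by rewrite eq eqxx in neq_ij.
    by exists i, (j - i); rewrite subn_gt0 subnKC ?lt_ij ?(ltnW lt_ij).
  by exists j, (i - j); rewrite subn_gt0 subnKC ?lt_ji ?(ltnW lt_ji).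
exists (i0.+1 * p).-1; set k := _.-1.
have k1 : k.+1 = i0.+1 * p by rewrite prednK // muln_gt0.
have i0k : i0 <= k by rewrite -ltnS k1 leq_pmulr.
by rewrite pw_add -addnS k1 (pw_periodic per).
Qed.

End IdempotentPower.

Lemma total_preorder_min (T : finType) (r : rel T) (A : {set T}) :
  {in A &, total r} -> transitive r -> A != set0 ->
  exists2 b, b \in A & {in A, forall y, r b y}.
Proof.
move=> r_tot r_tr /set0Pn [b0 b0A].
have [b bA b_max] := @arg_maxnP _ b0 (mem A) (fun b => #|[set y in A | r b y]|) b0A.
exists b => // y yA; apply/negPn/negP=> rby.
have ryb : r y b by move: (r_tot b y bA yA); rewrite (negbTE rby).
have : [set z in A | r b z] \proper [set z in A | r y z].
  apply/properP; split.
    by apply/subsetP=> z; rewrite !inE => /andP [-> rbz]; apply: r_tr rbz.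
  by exists y; rewrite !inE ?yA //= -[r y y]orbb r_tot.
by move/proper_card; rewrite ltnNge; move/negP; apply; apply: b_max.
Qed.

Section SemitransitiveSemigroup.
Variables (n : nat) (S : {set pfun n}).
Hypothesis S_sub : subsemigroup_noninv S.
Hypothesis S_semitrans : semitransitive S.
Implicit Types (f g e psi : pfun n) (x y z : 'I_n).

Lemma S_pinj f : f \in S -> pinj f.
Proof. by case: S_sub => S_ok _ /S_ok /andP []. Qed.

Lemma S_pcomp f g : f \in S -> g \in S -> pcomp f g \in S.
Proof. by case: S_sub => _; apply. Qed.

Lemma S_not_total f : f \in S -> pdom f != setT.
Proof.
move=> Sf; case: S_sub => /(_ f Sf) /andP [f_inj f_nperm] _.
by apply: contra f_nperm => /eqP; apply: total_is_perm.
Qed.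

Definition reach x y := [exists f in S, f x == Some y].

Lemma reachP x y : reflect (exists2 f, f \in S & f x = Some y) (reach x y).
Proof.
apply: (iffP existsP) => [[f /andP [Sf /eqP fxy]]|[f Sf fxy]]; exists f => //.
by rewrite Sf fxy eqxx.
Qed.

Lemma reach_total : total reach.
Proof.
move=> x y; have [f Sf [fxy|fyx]] := S_semitrans x y.
  by apply/orP; left; apply/reachP; exists f.
by apply/orP; right; apply/reachP; exists f.
Qed.

Lemma reach_trans : transitive reach.
Proof.
move=> y x z /reachP [f Sf fxy] /reachP [g Sg gyz]; apply/reachP.
by exists (pcomp f g); [apply: S_pcomp | rewrite pcompE fxy].
Qed.

Definition idem_fixing x e := [&& e \in S, pidem e & e x == Some x].

Lemma idem_fixing_pid x e : idem_fixing x e -> pid e.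
Proof. by case/and3P=> Se e_idem _; apply: pidem_pid => //; apply: S_pinj. Qed.

(* Semitransitivity at (x, x) gives phi in S fixing x; an idempotent power of
   phi still fixes x. *)
Lemma idem_fixing_exists x : exists e, idem_fixing x e.
Proof.
have [phi Sphi phi_x] := S_semitrans x x.
have {}phi_x : phi x = Some x by case: phi_x.
have [k pw_idem] := @pw_idempotent _ (@pcomp n) (@pcompA n) phi.
exists (pw (@pcomp n) phi k); apply/and3P; split.
- by elim: {pw_idem}k => [|k IHk] //=; apply: S_pcomp.
- exact/eqP.
- by apply/eqP; elim: {pw_idem}k => [|k IHk] //=; rewrite pcompE phi_x.
Qed.

Lemma minimal_idem_exists x :
  exists e, idem_fixing x e && [forall f, idem_fixing x f ==> (#|pdom e| <= #|pdom f|)].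
Proof.
have [e0 e0_fix] := idem_fixing_exists x.
have [e e_fix e_min] := arg_minnP (fun e : pfun n => #|pdom e|) e0_fix.
by exists e; rewrite e_fix; apply/forallP=> f; apply/implyP; apply: e_min.
Qed.

Definition minimal_idem x := xchoose (minimal_idem_exists x).

(* block is locked so that comparisons of blocks are never attempted by
   unfolding minimal_idem; blockE gives access to its definition. *)
Fact block_key : unit. Proof. by []. Qed.
Definition block := locked_with block_key (fun x => pdom (minimal_idem x)).

Lemma blockE x : block x = pdom (minimal_idem x).
Proof. by rewrite /block unlock. Qed.

Lemma minimal_idem_fixing x : idem_fixing x (minimal_idem x).
Proof. by case/andP: (xchooseP (minimal_idem_exists x)). Qed.

Lemma minimal_idem_min x f : idem_fixing x f -> #|block x| <= #|pdom f|.
Proof.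
rewrite blockE; case/andP: (xchooseP (minimal_idem_exists x)) => _.
by move=> /forallP/(_ f)/implyP.
Qed.

Lemma minimal_idem_S x : minimal_idem x \in S.
Proof. by case/and3P: (minimal_idem_fixing x). Qed.

Lemma minimal_idem_pid x : pid (minimal_idem x).
Proof. exact: idem_fixing_pid (minimal_idem_fixing x). Qed.

Lemma minimal_idem_fix x : minimal_idem x x = Some x.
Proof. by case/and3P: (minimal_idem_fixing x) => _ _ /eqP. Qed.

Lemma minimal_idem_nonzero x : minimal_idem x != pzero n.
Proof. by apply/eqP=> e0; move: (minimal_idem_fix x); rewrite e0 ffunE. Qed.

Lemma block_self x : x \in block x.
Proof. by rewrite blockE in_pdom minimal_idem_fix. Qed.

(* Every idempotent of S defined at x is defined on the whole block of x:
   composing it with the minimal idempotent at x cannot shrink the domain. *)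
Lemma block_sub x f : f \in S -> pid f -> x \in pdom f -> block x \subset pdom f.
Proof.
move=> Sf f_id fx; pose g := pcomp (minimal_idem x) f.
have g_id : pid g by apply: pid_pcomp f_id; apply: minimal_idem_pid.
have g_fix : idem_fixing x g.
  rewrite /idem_fixing S_pcomp ?minimal_idem_S ?pid_pidem //=.
  by rewrite pcompE minimal_idem_fix /= pid_fix.
have dom_g : pdom g = block x.
  by apply/eqP; rewrite eqEcard minimal_idem_min // andbT blockE pdom_pcomp.
rewrite -dom_g; apply/subsetP=> z; rewrite !in_pdom pcompE.
by case ez: (minimal_idem x z) => [w|] //=; rewrite (minimal_idem_pid ez).
Qed.

Lemma block_mono a x : a \in block x -> block a \subset block x.
Proof. by rewrite blockE; apply: block_sub; [apply: minimal_idem_S | apply: minimal_idem_pid]. Qed.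

Lemma block_eq a b : a \in block b -> b \in block a -> block a = block b.
Proof. by move=> ab ba; apply/eqP; rewrite eqEsubset !block_mono. Qed.

Lemma block_proper x : block x != setT.
Proof. by rewrite blockE; apply/S_not_total/minimal_idem_S. Qed.

Definition core := [set t | [forall f in S, f t != None]].

Lemma coreP t : reflect (forall f, f \in S -> f t != None) (t \in core).
Proof. by rewrite inE; apply: (iffP forall_inP). Qed.

Lemma core_image f t t' : f \in S -> t \in core -> f t = Some t' -> t' \in core.
Proof.
move=> Sf /coreP t_core ftt'; apply/coreP=> g Sg.
by move: (t_core _ (S_pcomp Sf Sg)); rewrite pcompE ftt'.
Qed.

(* Each f in S maps the core injectively into itself, hence onto itself, so a
   point mapped into the core already lies in it. *)
Lemma core_preimage f u y : f \in S -> y \in core -> f u = Some y -> u \in core.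
Proof.
move=> Sf y_core fuy.
have f_core t : t \in core -> exists2 t', f t = Some t' & t' \in core.
  move=> t_core; move/coreP/(_ f Sf): (t_core); case ft: (f t) => [t'|] // _.
  by exists t' => //; apply: core_image ft.
have [t t_core fty] := pinj_onto (S_pinj Sf) f_core y_core.
by rewrite -(pinjP (S_pinj Sf) (etrans fty (esym fuy))) // fty.
Qed.

Lemma min_dom_image psi x y : psi \in S ->
  (forall f, f \in S -> #|pdom psi| <= #|pdom f|) -> psi x = Some y -> y \in core.
Proof.
move=> Spsi psi_min psixy; apply/coreP=> f Sf.
have dom_eq : pdom (pcomp psi f) = pdom psi.
  by apply/eqP; rewrite eqEcard pdom_pcomp psi_min ?S_pcomp.
have : x \in pdom (pcomp psi f) by rewrite dom_eq in_pdom psixy.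
by rewrite in_pdom pcompE psixy.
Qed.

(* S contains the empty map.  Otherwise an element psi of least domain has an
   image point y in the core; the core is not all of X, and semitransitivity
   applied to y and a point outside the core contradicts the two lemmas above. *)
Lemma pzero_in_S (x0 : 'I_n) : pzero n \in S.
Proof.
have [phi0 Sphi0 _] := S_semitrans x0 x0.
have [psi Spsi psi_min] := arg_minnP (fun f : pfun n => #|pdom f|) Sphi0.
have [<- //|/pdom_nonzero [x]] := eqVneq psi (pzero n).
rewrite in_pdom; case psix: (psi x) => [y|] // _.
have y_core := min_dom_image Spsi psi_min psix.
have /subsetPn [u _ u_core] : ~~ (setT \subset core).
  apply: contra (S_not_total Spsi); rewrite subTset => /eqP core_T.
  apply/eqP/setP=> t; rewrite in_setT in_pdom.
  by have := in_setT t; rewrite -core_T => /coreP; apply.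
have [phi Sphi [phiyu|phiuy]] := S_semitrans y u.
  by rewrite (core_image Sphi y_core phiyu) in u_core.
by rewrite (core_preimage Sphi y_core phiuy) in u_core.
Qed.

(* The pair of blocks is then determined by
   psi, which is what makes the elements built below distinct. *)
Definition framed psi a b :=
  psi a = Some b /\ forall z w, psi z = Some w -> z \in block a /\ w \in block b.

Lemma framed_blocks psi a b a' b' :
  framed psi a b -> framed psi a' b' -> block a = block a' /\ block b = block b'.
Proof.
move=> [psi_ab psi_in] [psi_ab' psi_in'].
have [a'_in b'_in] := psi_in _ _ psi_ab'.
have [a_in b_in] := psi_in' _ _ psi_ab.
by split; apply: block_eq.
Qed.

Lemma framed_nonzero psi a b : framed psi a b -> psi != pzero n.
Proof. by case=> psi_ab _; apply/eqP=> psi0; rewrite psi0 ffunE in psi_ab. Qed.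

Lemma framed_target psi a b b' : framed psi a b -> framed psi a b' -> b = b'.
Proof. by move=> [psi_ab _] [psi_ab' _]; move: psi_ab'; rewrite psi_ab => -[]. Qed.

Lemma framed_source psi a a' b :
  psi \in S -> framed psi a b -> framed psi a' b -> a = a'.
Proof.
move=> Spsi [psi_ab _] [psi_a'b _]; apply: (pinjP (S_pinj Spsi)).
  by rewrite psi_ab psi_a'b.
by rewrite psi_ab.
Qed.

(* link a b: some element of S mapping a to b, cut down by the minimal
   idempotents at a and b so that it is framed by (a, b). *)
Definition link a b :=
  pcomp (pcomp (minimal_idem a) (odflt (pzero n) [pick f in S | f a == Some b]))
        (minimal_idem b).

Lemma link_spec a b : reach a b -> link a b \in S /\ framed (link a b) a b.
Proof.
move=> /reachP [f Sf fab]; rewrite /link.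
case: pickP => [phi /andP [Sphi /eqP phi_ab]|no_phi]; last first.
  by move: (no_phi f); rewrite Sf fab eqxx.
split; first by rewrite !S_pcomp ?minimal_idem_S.
split; first by rewrite !pcompE minimal_idem_fix /= phi_ab /= minimal_idem_fix.
move=> z w; rewrite !pcompE.
case ez: (minimal_idem a z) => [z'|] //=; have z'z := minimal_idem_pid ez; subst z'.
case: (phi z) => [v|] //= ev; have vw := minimal_idem_pid ev; subst v.
by rewrite !blockE !in_pdom ez ev.
Qed.

Section ThreeBlocks.
Variables x1 x2 x3 : 'I_n.
Hypotheses (neq12 : block x1 != block x2) (neq13 : block x1 != block x3)
           (neq23 : block x2 != block x3).

Definition base B :=
  odflt x1 [pick b | (block b == B) && [forall z, (block z == B) ==> reach b z]].

Lemma base_spec y : block (base (block y)) = block y /\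
  forall z, block z = block y -> reach (base (block y)) z.
Proof.
have [b b_in b_min] : exists2 b, b \in [set z | block z == block y] &
    {in [set z | block z == block y], forall z, reach b z}.
  apply: total_preorder_min; [exact: in2W reach_total | exact: reach_trans |].
  by apply/set0Pn; exists y; rewrite inE.
rewrite /base; case: pickP => [b' /andP [/eqP b'y /forall_inP b'_min]|no_base] /=.
  by split=> // z zy; apply: b'_min; rewrite zy.
move: (no_base b); rewrite inE in b_in; rewrite b_in /=; move/negP; case.
by apply/forall_inP=> z zy; apply: b_min; rewrite inE.
Qed.

Definition next B :=
  if B == block x1 then block x2 else if B == block x2 then block x3 else block x1.

Lemma next_block B : exists x, block x = next B.
Proof. by rewrite /next; case: ifP => _; [exists x2 | case: ifP => _; [exists x3 | exists x1]]. Qed.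

Lemma next_neq B : next B != B.
Proof.
rewrite /next; case: (eqVneq B (block x1)) => [->|B1]; first by rewrite eq_sym.
by case: (eqVneq B (block x2)) => [->|B2]; rewrite eq_sym.
Qed.

Lemma next_next_neq B : next (next B) != B.
Proof.
have n21 : (block x2 == block x1) = false by rewrite eq_sym (negbTE neq12).
have n31 : (block x3 == block x1) = false by rewrite eq_sym (negbTE neq13).
have n32 : (block x3 == block x2) = false by rewrite eq_sym (negbTE neq23).
rewrite /next; case: (eqVneq B (block x1)) => [->|B1]; first by rewrite n21 eqxx n31.
case: (eqVneq B (block x2)) => [->|B2]; first by rewrite n31 n32 eq_sym n21.
by rewrite eqxx eq_sym.
Qed.

Definition partner y := base (next (block y)).

Lemma partner_block y : block (partner y) = next (block y).
Proof. by rewrite /partner; have [x <-] := next_block (block y); apply: (proj1 (base_spec x)). Qed.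

Definition alpha y := link (base (block y)) y.
Definition beta y :=
  if reach y (partner y) then link y (partner y) else link (partner y) y.

Lemma alpha_spec y : alpha y \in S /\ framed (alpha y) (base (block y)) y.
Proof. by apply: link_spec; apply: (proj2 (base_spec y)). Qed.

Lemma beta_spec y :
  beta y \in S /\ (framed (beta y) y (partner y) \/ framed (beta y) (partner y) y).
Proof.
rewrite /beta; case: ifP => reach_yp.
  by have [S_beta framed_beta] := link_spec reach_yp; split; [|left].
have reach_py : reach (partner y) y by move: (reach_total y (partner y)); rewrite reach_yp.
by have [S_beta framed_beta] := link_spec reach_py; split; [|right].
Qed.

(* Injectivity of alpha and beta, and disjointness of their ranges, follow by
   comparing the blocks of framing pairs. *)
Lemma partner_eq y y' : block y = block y' -> partner y = partner y'.
Proof. by rewrite /partner => ->. Qed.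

Lemma alpha_inj : injective alpha.
Proof.
move=> y y' eq_alpha; have [_ fr] := alpha_spec y; have [_ fr'] := alpha_spec y'.
rewrite eq_alpha in fr; have [_ yy'] := framed_blocks fr fr'.
by move: fr; rewrite yy' => /framed_target; apply.
Qed.

Lemma alpha_neq_beta y y' : alpha y != beta y'.
Proof.
apply/eqP=> eq_ab; have [_ fr] := alpha_spec y; rewrite eq_ab in fr.
have [by_y _] := base_spec y; have py' := partner_block y'.
have [_ [fr'|fr']] := beta_spec y'; have [e1 e2] := framed_blocks fr fr'.
  by move: (next_neq (block y')); rewrite -py' -e2 -e1 by_y eqxx.
by move: (next_neq (block y')); rewrite -py' -e1 by_y e2 eqxx.
Qed.

Lemma beta_inj : injective beta.
Proof.
move=> y y' eq_beta.
have [Sb [fr|fr]] := beta_spec y; have [_ [fr'|fr']] := beta_spec y';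
  rewrite eq_beta in Sb fr; have [e1 e2] := framed_blocks fr fr'.
- by rewrite (partner_eq e1) in fr; apply: framed_source fr fr'.
- move: (next_next_neq (block y')).
  by rewrite -(partner_block y') -e1 -(partner_block y) e2 eqxx.
- move: (next_next_neq (block y)).
  by rewrite -(partner_block y) e1 -(partner_block y') -e2 eqxx.
- by rewrite (partner_eq e2) in fr; apply: framed_target fr fr'.
Qed.

Definition witness (o : option ('I_n + 'I_n)) : pfun n :=
  match o with None => pzero n | Some (inl y) => alpha y | Some (inr y) => beta y end.

Lemma witness_in_S o : witness o \in S.
Proof.
case: o => [[y|y]|] /=; [exact: (proj1 (alpha_spec y)) | exact: (proj1 (beta_spec y)) |].
exact: pzero_in_S x1.
Qed.

Lemma witness_inj : injective witness.
Proof.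
have alpha_nz y : alpha y != pzero n by apply: framed_nonzero (proj2 (alpha_spec y)).
have beta_nz y : beta y != pzero n.
  by case: (beta_spec y) => _ [] /framed_nonzero.
move=> [[y|y]|] [[y'|y']|]; rewrite /witness => eq_w.
- by rewrite (alpha_inj eq_w).
- by move: (alpha_neq_beta y y'); rewrite eq_w eqxx.
- by move: (alpha_nz y); rewrite eq_w eqxx.
- by move: (alpha_neq_beta y' y); rewrite eq_w eqxx.
- by rewrite (beta_inj eq_w).
- by move: (beta_nz y); rewrite eq_w eqxx.
- by move: (alpha_nz y'); rewrite eq_w eqxx.
- by move: (beta_nz y'); rewrite eq_w eqxx.
- by [].
Qed.

Lemma three_blocks_large : 2 * n < #|S|.
Proof.
have sub_S : [set witness o | o in {: option ('I_n + 'I_n)}] \subset S.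
  by apply/subsetP=> _ /imsetP [o _ ->]; apply: witness_in_S.
move: (subset_leq_card sub_S); rewrite card_imset; last exact: witness_inj.
by rewrite card_option card_sum card_ord mul2n addnn.
Qed.

End ThreeBlocks.

Section TwoBlocks.
Variables x1 x2 : 'I_n.
Hypothesis neq12 : block x1 != block x2.
Hypothesis two_blocks : forall x, block x = block x1 \/ block x = block x2.

(* An idempotent of S defined at z has exactly the block of z as domain:
   a point of its domain in the other block would make it total. *)
Lemma idem_dom g z : g \in S -> pid g -> z \in pdom g -> pdom g = block z.
Proof.
move=> Sg g_id gz; apply/eqP; rewrite eqEsubset block_sub // andbT.
apply/subsetP=> w gw; apply: contraR (S_not_total Sg) => w_out.
have neq_wz : block w != block z by apply: contraNneq w_out => <-; apply: block_self.
have cover u : block u = block w \/ block u = block z.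
  case: (two_blocks w) (two_blocks z) neq_wz => -> [] -> neq_wz;
    try by case/eqP: neq_wz.
  - by case: (two_blocks u); [left|right].
  - by case: (two_blocks u); [right|left].
apply/eqP/setP=> u; rewrite in_setT; have u_in := block_self u.
by case: (cover u) => blk_u; rewrite blk_u in u_in; apply: (subsetP (block_sub _ _ _)) u_in.
Qed.

Lemma block_of_member x z : z \in block x -> block x = block z.
Proof.
rewrite [block x]blockE => zx.
by apply: idem_dom zx; [apply: minimal_idem_S | apply: minimal_idem_pid].
Qed.

Lemma two_blocks_idempotents :
  [set e in S | pidem e && (e != pzero n)] = [set minimal_idem x1; minimal_idem x2].
Proof.
apply/setP=> g; rewrite !inE; apply/idP/idP.
  case/and3P=> Sg g_idem /pdom_nonzero [z gz].
  have g_id : pid g by apply: pidem_pid => //; apply: S_pinj.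
  have dom_g := idem_dom Sg g_id gz.
  by case: (two_blocks z) => z_blk; apply/orP; [left|right]; apply/eqP;
    apply: pid_eq g_id (@minimal_idem_pid _) _; rewrite dom_g z_blk blockE.
by case/orP=> /eqP ->; rewrite minimal_idem_S minimal_idem_nonzero pid_pidem //;
  apply: minimal_idem_pid.
Qed.

Lemma two_blocks_partition :
  [disjoint block x1 & block x2] /\ block x1 :|: block x2 = setT.
Proof.
split.
  rewrite -setI_eq0; apply/set0Pn=> -[z /setIP [z1 z2]]; move/negP: neq12; apply.
  by rewrite (block_of_member z1) (block_of_member z2).
apply/setP=> u; rewrite in_setU in_setT.
by case: (two_blocks u) => <-; rewrite block_self ?orbT.
Qed.

End TwoBlocks.

End SemitransitiveSemigroup.

Unset Implicit Arguments.
Theorem lemma2p1 (n : nat) (S : {set pfun n}) :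
  2 <= n -> subsemigroup_noninv S -> semitransitive S -> #|S| <= 2 * n ->
  exists e1 e2 : pfun n,
    [/\ e1 != e2,
        [set e in S | pidem e && (e != pzero n)] = [set e1; e2],
        [disjoint pdom e1 & pdom e2] &
        pdom e1 :|: pdom e2 = setT].
Proof.
move=> n_ge2 S_sub S_semitrans S_small.
pose blk := block S_sub S_semitrans; pose x1 : 'I_n := Ordinal (ltnW n_ge2).
have [x2 neq12] : exists x2, blk x1 != blk x2.
  have /subsetPn [x2 _ x2_out] : ~~ (setT \subset blk x1) by rewrite subTset block_proper.
  by exists x2; apply: contraNneq x2_out => ->; apply: block_self.
have [x3 /andP [neq13 neq23]|no_third] :=
  pickP (fun x3 => (blk x1 != blk x3) && (blk x2 != blk x3)).
  by move: (three_blocks_large neq12 neq13 neq23); rewrite ltnNge S_small.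
have two_blocks x : blk x = blk x1 \/ blk x = blk x2.
  by move: (no_third x); case: eqVneq => [|_ /= /negbFE/eqP]; [left | right].
have [disj cover] := two_blocks_partition neq12 two_blocks.
exists (minimal_idem S_sub S_semitrans x1), (minimal_idem S_sub S_semitrans x2).
rewrite -!blockE; split=> //; last exact: two_blocks_idempotents two_blocks.
by apply: contraNneq neq12 => eq_e; rewrite /blk !blockE eq_e.
Qed.
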